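(* For every $\beta\in\mathbb{C}$, the linear map $\mathrm{d}_{1-\beta,\beta}:\mathcal{W}\to\mathcal{F}_{1-\beta}\otimes\mathcal{F}_\beta$ defined by $$\mathrm{d}_{1-\beta,\beta}(L_n)=\begin{cases}\sum_{i=0}^{n-1}(i-n\beta)v_i\otimes v_{n-i},&n\geq1;\\ 0,&n=0;\\ -\sum_{i=n}^{-1}(i-n\beta)v_i\otimes v_{n-i},&n\leq -1\end{cases}$$ is a 1-cocycle which is not a 1-coboundary.
   Context: The Witt algebra $\mathcal{W}$ has basis $\{L_n\mid n\in\mathbb{Z}\}$ and bracket $[L_m,L_n]=(m-n)L_{m+n}$. $\mathcal{F}_\alpha$ has basis $\{v_n\}$ with $L_m\cdot v_n=-(\alpha m+n)v_{m+n}$; $\mathcal{F}_\alpha\otimes\mathcal{F}_\beta$ is a $\mathcal{W}$-module via $L_m\cdot(v_i\otimes v_j)=-(i+\alpha m)v_{m+i}\otimes v_j-(j+\beta m)v_i\otimes v_{m+j}$. A 1-cocycle is a linear map $d$ with $d([x,y])=x\cdot d(y)-y\cdot d(x)$; a 1-coboundary is a map $x\mapsto x\cdot v$ for a fixed $v$ in the module. *)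

From HB Require Import structures.
From mathcomp Require Import all_boot all_order all_algebra.
From mathcomp Require Import complex.
From mathcomp Require Import reals.
Set Implicit Arguments. Unset Strict Implicit. Unset Printing Implicit Defensive.
Import Order.TTheory GRing.Theory Num.Theory.
Local Open Scope ring_scope.

Section WittModules.
Variable K : comNzRingType.

(* An element of the Witt algebra W is a finite formal linear combination
   sum_k c_k L_{n_k}, represented by the list of pairs (n_k, c_k). *)
Definition Wvec := seq (int * K).
(* An element of F_alpha (x) F_beta is a finite formal linear combination
   sum_k c_k v_{i_k} (x) v_{j_k}, represented by the list ((i_k, j_k), c_k). *)
Definition Tvec := seq ((int * int) * K).

Definition coefW (x : Wvec) (n : int) : K := \sum_(p <- x | p.1 == n) p.2.
Definition coefT (u : Tvec) (ij : int * int) : K := \sum_(p <- u | p.1 == ij) p.2.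

Definition eqW (x y : Wvec) := forall n, coefW x n = coefW y n.
Definition eqT (u v : Tvec) := forall ij, coefT u ij = coefT v ij.

Definition addW (x y : Wvec) : Wvec := x ++ y.
Definition scaleW (c : K) (x : Wvec) : Wvec := [seq (p.1, c * p.2) | p <- x].
Definition addT (u v : Tvec) : Tvec := u ++ v.
Definition scaleT (c : K) (u : Tvec) : Tvec := [seq (p.1, c * p.2) | p <- u].
Definition subT (u v : Tvec) : Tvec := u ++ scaleT (-1) v.

Definition bracket (x y : Wvec) : Wvec :=
  [seq (p.1 + q.1, (p.1 - q.1)%:~R * p.2 * q.2) | p <- x, q <- y].

Definition act_basis (alpha beta : K) (m : int) (ij : int * int) : Tvec :=
  [:: ((m + ij.1, ij.2), - (ij.1%:~R + alpha * m%:~R));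
      ((ij.1, m + ij.2), - (ij.2%:~R + beta * m%:~R))].

Definition actT (alpha beta : K) (x : Wvec) (u : Tvec) : Tvec :=
  flatten [seq [seq (t.1, p.2 * q.2 * t.2) | t <- act_basis alpha beta p.1 q.1]
          | p <- x, q <- u].

Definition is_linear_map (d : Wvec -> Tvec) :=
  [/\ forall x y, eqW x y -> eqT (d x) (d y),
      forall x y, eqT (d (addW x y)) (addT (d x) (d y)) &
      forall c x, eqT (d (scaleW c x)) (scaleT c (d x))].

Definition is_cocycle (act : Wvec -> Tvec -> Tvec) (d : Wvec -> Tvec) :=
  is_linear_map d /\
  forall x y, eqT (d (bracket x y)) (subT (act x (d y)) (act y (d x))).

Definition is_coboundary (act : Wvec -> Tvec -> Tvec) (d : Wvec -> Tvec) :=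
  exists v : Tvec, forall x, eqT (d x) (act x v).

Definition zrange (a b : int) : seq int := [seq a + k%:Z | k <- iota 0 `|b - a|%N].

Definition d_basis (beta : K) (n : int) : Tvec :=
  if (1 <= n)%R then [seq ((i, n - i), i%:~R - n%:~R * beta) | i <- zrange 0 n]
  else if n == 0 then [::]
  else [seq ((i, n - i), - (i%:~R - n%:~R * beta)) | i <- zrange n 0].

Definition d_ext (beta : K) (x : Wvec) : Tvec :=
  flatten [seq scaleT p.2 (d_basis beta p.1) | p <- x].

End WittModules.

From HB Require Import structures.
From mathcomp Require Import all_boot all_order all_algebra.
From mathcomp Require Import complex reals.
From mathcomp Require Import zify ring.
Import GRing.Theory Num.Theory.
Local Open Scope ring_scope.
Set Implicit Arguments. Unset Strict Implicit.

(** Writing [d(L_n) = sum_i c_n(i) v_i (x) v_(n-i)]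
    with [c_n(i) = (i - n beta) (H(i) - H(i - n))] for the Heaviside function
    [H], both branches of the definition become one formula, and the cocycle
    identity at [v_i (x) v_j] for the pair [L_m, L_n] (with [m + n = i + j])
    becomes a ring identity.
    A coboundary [x |-> x . v] moves the first tensor index of the finitely
    many terms of [v] by at most [n] (for [x = L_n]), so for large [n] its
    coefficient at [v_i (x) v_(n-i)] vanishes whenever both [i] and [n - i]
    are large; but [d(L_n)] has coefficient [i - n beta] there, and two
    consecutive values of [i] differ by [1]. *)

Section WittCocycle.
Variable K : comNzRingType.

Lemma coefT_cat (u v : Tvec K) ij : coefT (u ++ v) ij = coefT u ij + coefT v ij.
Proof. by rewrite /coefT big_cat. Qed.

Lemma coefT_scale c (u : Tvec K) ij : coefT (scaleT c u) ij = c * coefT u ij.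
Proof. by rewrite /coefT /scaleT big_map mulr_sumr. Qed.

Lemma coefT_flatten (us : seq (Tvec K)) ij :
  coefT (flatten us) ij = \sum_(u <- us) coefT u ij.
Proof. by rewrite /coefT big_flatten. Qed.

Lemma coefW_scale c (x : Wvec K) n : coefW (scaleW c x) n = c * coefW x n.
Proof. by rewrite /coefW /scaleW big_map mulr_sumr. Qed.

Lemma coefWE (x : Wvec K) n :
  coefW x n = \sum_(p <- x) (if p.1 == n then p.2 else 0).
Proof. by rewrite /coefW big_mkcond. Qed.

Lemma coefW_bracket (x y : Wvec K) s :
  coefW (bracket x y) s =
  \sum_(p <- x) \sum_(q <- y)
     (if p.1 + q.1 == s then (p.1 - q.1)%:~R * p.2 * q.2 else 0).
Proof.
rewrite coefWE /bracket.
by rewrite (big_allpairs_dep (h := fun p q => (p.1 + q.1, (p.1 - q.1)%:~R * p.2 * q.2))).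
Qed.

Lemma coefT_actT alpha beta (x : Wvec K) (u : Tvec K) i j :
  coefT (actT alpha beta x u) (i, j) =
  \sum_(p <- x) p.2 *
    (- ((i - p.1)%:~R + alpha * p.1%:~R) * coefT u (i - p.1, j)
     - ((j - p.1)%:~R + beta * p.1%:~R) * coefT u (i, j - p.1)).
Proof.
rewrite /actT coefT_flatten (big_allpairs_dep
  (h := fun p q => [seq (t.1, p.2 * q.2 * t.2) | t <- act_basis alpha beta p.1 q.1])).
apply: eq_bigr => p _.
rewrite /coefT (big_mkcond (fun t : (int * int) * K => t.1 == (i - p.1, j)))
  (big_mkcond (fun t : (int * int) * K => t.1 == (i, j - p.1))) /=.
rewrite !mulr_sumr -sumrB mulr_sumr.
apply: eq_bigr => -[[a b] c] _; rewrite /= !big_cons big_nil addr0 /= !xpair_eqE.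
have -> : (p.1 + a == i) = (a == i - p.1) by apply/eqP/eqP; lia.
have -> : (p.1 + b == j) = (b == j - p.1) by apply/eqP/eqP; lia.
case: (eqVneq a (i - p.1)) => ha; case: (eqVneq b j) => hb;
case: (eqVneq a i) => ha'; case: (eqVneq b (j - p.1)) => hb' /=;
  rewrite ?ha ?hb ?ha' ?hb' ?mulr0 ?subr0 ?addr0 ?add0r ?sub0r; try ring.
all: by rewrite -hb' hb; ring.
Qed.

Lemma sum_pred1_uniq (T : eqType) (s : seq T) (i : T) (F : T -> K) :
  uniq s -> \sum_(k <- s | k == i) F k = if i \in s then F i else 0.
Proof.
move=> s_uniq; rewrite big_mkcond; case: ifP => s_i.
  by rewrite (bigD1_seq i) //= eqxx big1 ?addr0 // => k /negbTE->.
rewrite big_seq big1 // => k s_k; case: eqP => // ek.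
by rewrite ek s_i in s_k.
Qed.

Lemma mem_zrange (a b k : int) : a <= b -> (k \in zrange a b) = (a <= k < b).
Proof.
move=> le_ab; apply/mapP/idP => [[l] | k_in].
  by rewrite mem_iota => l_lt ->; lia.
by exists `|k - a|%N; rewrite ?mem_iota; lia.
Qed.

Lemma zrange_uniq (a b : int) : uniq (zrange a b).
Proof. by rewrite map_inj_uniq ?iota_uniq // => k l /addrI []. Qed.

Lemma coefT_zrange (a b n : int) (f : int -> K) i j : a <= b ->
  coefT [seq ((k, n - k), f k) | k <- zrange a b] (i, j) =
  if (n == i + j) && (a <= i < b) then f i else 0.
Proof.
move=> le_ab; rewrite /coefT big_map.
rewrite (eq_bigl (fun k => (k == i) && (n == i + j))) => [|k]; last first.
  by rewrite /= xpair_eqE; case: eqP => // ->; apply/eqP/eqP; lia.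
rewrite big_mkcondr sum_pred1_uniq ?zrange_uniq // mem_zrange //.
by case: (n == i + j); rewrite ?andbF ?if_same.
Qed.

Definition heaviside (x : int) : K := if 0 <= x then 1 else 0.

Lemma heavisideB (n i : int) :
  heaviside i - heaviside (i - n) =
  if 0 <= i < n then 1 else if n <= i < 0 then -1 else 0.
Proof.
rewrite /heaviside; case: (boolP (0 <= i)) => i_ge0; case: (boolP (0 <= i - n)) => in_ge0;
  case: ifP => in0n; [|case: ifP => inn0|..]; rewrite ?subrr ?subr0 ?sub0r //; lia.
Qed.

Definition d_coef (beta : K) (n i : int) : K :=
  (i%:~R - n%:~R * beta) * (heaviside i - heaviside (i - n)).

Lemma coefT_d_basis beta n i j :
  coefT (d_basis beta n) (i, j) = if n == i + j then d_coef beta n i else 0.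
Proof.
rewrite /d_basis /d_coef heavisideB; case: ifP => pos_n.
  rewrite coefT_zrange; last lia.
  case: (n == i + j) => //=; have -> : (n <= i < 0) = false by lia.
  by case: ifP; rewrite ?mulr1 ?mulr0.
case: ifP => [/eqP->|nz_n].
  rewrite /coefT big_nil; have -> : (0 <= i < 0) = false by lia.
  by rewrite mulr0 if_same.
rewrite coefT_zrange; last lia.
case: (n == i + j) => //=; have -> : (0 <= i < n) = false by lia.
by case: ifP; rewrite ?mulrN1 ?mulr0.
Qed.

Lemma coefT_d_ext beta (x : Wvec K) i j :
  coefT (d_ext beta x) (i, j) = coefW x (i + j) * d_coef beta (i + j) i.
Proof.
rewrite /d_ext coefT_flatten big_map coefWE mulr_suml.
apply: eq_bigr => p _; rewrite coefT_scale coefT_d_basis.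
by case: eqP => [->|]; rewrite ?mulr0 ?mul0r.
Qed.

Lemma d_ext_linear beta : is_linear_map (d_ext (K:=K) beta).
Proof.
split.
- by move=> x y eq_xy [i j]; rewrite !coefT_d_ext eq_xy.
- by move=> x y ij; rewrite /d_ext /addW map_cat flatten_cat.
- by move=> c x [i j]; rewrite coefT_scale !coefT_d_ext coefW_scale mulrA.
Qed.

(** Coefficient of [v_i (x) v_j] in [L_m . d(L_(i+j-m))]. *)
Definition act_d_coef beta (i j m : int) : K :=
  - ((i - m)%:~R + (1 - beta) * m%:~R) * d_coef beta (i - m + j) (i - m)
  - ((j - m)%:~R + beta * m%:~R) * d_coef beta (i + (j - m)) i.

Lemma coefT_act_d_ext beta (x y : Wvec K) i j :
  coefT (actT (1 - beta) beta x (d_ext beta y)) (i, j) =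
  \sum_(p <- x) \sum_(q <- y)
     (if p.1 + q.1 == i + j then p.2 * q.2 * act_d_coef beta i j p.1 else 0).
Proof.
rewrite coefT_actT; apply: eq_bigr => p _.
rewrite !coefT_d_ext !coefWE !mulr_suml !mulr_sumr -sumrB mulr_sumr.
apply: eq_bigr => q _.
have -> : (q.1 == i - p.1 + j) = (p.1 + q.1 == i + j) by apply/eqP/eqP; lia.
have -> : (q.1 == i + (j - p.1)) = (p.1 + q.1 == i + j) by apply/eqP/eqP; lia.
by case: ifP => _; rewrite /act_d_coef; [ring | rewrite !mul0r !mulr0 subrr mulr0].
Qed.

Lemma d_coef_cocycle beta (m n i j : int) : m + n = i + j ->
  (m - n)%:~R * d_coef beta (i + j) i =
  act_d_coef beta i j m - act_d_coef beta i j n.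
Proof.
move=> mn_ij; have -> : j = m + n - i by lia.
rewrite /act_d_coef.
have -> : i - m + (m + n - i) = n by ring.
have -> : i + (m + n - i - m) = n by ring.
have -> : i - n + (m + n - i) = m by ring.
have -> : i + (m + n - i - n) = m by ring.
have -> : i + (m + n - i) = m + n by ring.
rewrite /d_coef.
have -> : i - m - n = i - (m + n) by ring.
have -> : i - n - m = i - (m + n) by ring.
rewrite !(intrD, intrN); ring.
Qed.

Lemma d_ext_cocycle beta : is_cocycle (actT (1 - beta) beta) (d_ext (K:=K) beta).
Proof.
split=> [|x y [i j]]; first exact: d_ext_linear.
rewrite /subT coefT_cat coefT_scale mulN1r !coefT_act_d_ext coefT_d_ext.
rewrite coefW_bracket [X in _ = _ - X]exchange_big /= -sumrB mulr_suml.
apply: eq_bigr => p _; rewrite -sumrB mulr_suml; apply: eq_bigr => q _.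
rewrite (addrC q.1); case: ifP => /eqP pq_ij; last by rewrite mul0r subrr.
transitivity (p.2 * q.2 * ((p.1 - q.1)%:~R * d_coef beta (i + j) i)); first ring.
by rewrite (d_coef_cocycle beta pq_ij); ring.
Qed.

Lemma coefT_eq0_large (v : Tvec K) a b :
  (\sum_(t <- v) `|t.1.1|%N < `|a|%N)%N -> coefT v (a, b) = 0.
Proof.
elim: v => [|[[a' b'] c] v IHv] a_large; first by rewrite /coefT big_nil.
move: a_large; rewrite big_cons /coefT big_cons xpair_eqE /= => a_large.
case: eqP => [ea|_] /=; first by rewrite ea in a_large; lia.
by apply: IHv; lia.
Qed.

Lemma d_ext_not_coboundary beta :
  ~ is_coboundary (actT (1 - beta) beta) (d_ext (K:=K) beta).
Proof.
case=> v d_cob; set N := (\sum_(t <- v) `|t.1.1|%N)%N.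
pose M : int := N.+1; pose n : int := 2 * M + 1.
have d_vanish i : M <= i -> M <= n - i -> i%:~R - n%:~R * beta = 0 :> K.
  move=> ge_i ge_ni; have := d_cob [:: (n, 1)] (i, n - i).
  rewrite coefT_d_ext coefT_actT big_seq1 /= !coefT_eq0_large -/N; try lia.
  rewrite addrC subrK coefWE big_seq1 eqxx mul1r /d_coef heavisideB.
  have -> : 0 <= i < n by lia.
  by rewrite /= mul1r mulr1 !mulr0 subrr.
have : (1 : K) = ((M + 1)%:~R - n%:~R * beta) - (M%:~R - n%:~R * beta).
  by rewrite intrD; ring.
rewrite !d_vanish ?subrr /n; try lia.
by move/eqP; rewrite oner_eq0.
Qed.

End WittCocycle.

Theorem propositionP1 (R : realType) (beta : R[i]) :
  is_cocycle (actT (1 - beta) beta) (d_ext beta) /\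
  ~ is_coboundary (actT (1 - beta) beta) (d_ext beta).
Proof. by split; [exact: d_ext_cocycle | exact: d_ext_not_coboundary]. Qed.
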